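(* Let $H<G$ be groups with $H$ $\sigma$-co-sofic in $G$. Then $H<G$ is relatively sofic over $G$.
   Context: $H$ is co-sofic in $G$ if there exist two decreasing sequences $(G_i)$ and $(H_i)$ of subgroups of $G$ such that $\bigcap_i G_i=H$, $H_i<G_i$, $H_i\triangleleft G$, $G/H_i$ is sofic, and $G_i/H_i$ is amenable for all $i$. $H$ is $\sigma$-co-sofic in $G$ if there exist two increasing sequences $(G_i)$ and $(H_i)$ of subgroups of $G$ such that $\bigcup_i G_i=G$, $\bigcup_i H_i=H$, $H_i<G_i$, and $H_i$ is co-sofic in $G_i$ for all $i$. $H<G$ is relatively sofic over a group $K$ if there exist a sequence of inclusions of groups $(H'_i<G'_i)_{i\in\mathbb N}$ with all $G'_i$ sofic and all $H'_i$ amenable, a free ultrafilter $\omega$ on $\mathbb N$, and an embedding $\pi:G\to\prod_\omega(G'_i\times K)$ into the algebraic ultraproduct such that $\pi(G)\cap\prod_\omega(H'_i\times K)=\pi(H)$. The algebraic ultraproduct is $\prod_\omega L_i=(\prod_i L_i)/N$ with $N=\{(g_i):\{i:g_i=1\}\in\omega\}$. *)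

From Stdlib Require Import ClassicalEpsilon.
From Stdlib Require List.
From mathcomp Require Import all_boot all_algebra all_fingroup.
Set Implicit Arguments. Unset Strict Implicit. Unset Printing Implicit Defensive.
Import GRing.Theory Num.Theory.

Record magma := Magma {
  car :> Type;
  gmul : car -> car -> car;
  gone : car;
  ginv : car -> car }.

Arguments gmul {m}. Arguments gone {m}. Arguments ginv {m}.

Definition is_group (G : magma) : Prop :=
  (forall x y z : G, gmul x (gmul y z) = gmul (gmul x y) z) /\
  (forall x : G, gmul gone x = x) /\ (forall x : G, gmul x gone = x) /\
  (forall x : G, gmul (ginv x) x = gone) /\ (forall x : G, gmul x (ginv x) = gone).

Record subgroup (G : magma) (H : G -> Prop) : Prop := {
  sg1 : H gone;
  sgM : forall x y, H x -> H y -> H (gmul x y);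
  sgV : forall x, H x -> H (ginv x) }.

Definition normal (G : magma) (H : G -> Prop) : Prop :=
  subgroup H /\ forall g h : G, H h -> H (gmul (ginv g) (gmul h g)).

Definition sub_magma (G : magma) (H : G -> Prop) (hH : subgroup H) : magma :=
  @Magma {x : G | H x}
    (fun x y => exist _ (gmul (proj1_sig x) (proj1_sig y))
                  (sgM hH (proj2_sig x) (proj2_sig y)))
    (exist _ gone (sg1 hH))
    (fun x => exist _ (ginv (proj1_sig x)) (sgV hH (proj2_sig x))).

(* Quotient G/N: elements are the cosets gN (as predicates); operations are
   computed on (chosen) representatives.  For N normal in a group G this is the
   usual quotient group. *)
Definition coset_pred (G : magma) (N : G -> Prop) (g : G) : G -> Prop :=
  fun x => N (gmul (ginv g) x).

Definition quot_car (G : magma) (N : G -> Prop) : Type :=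
  {S : G -> Prop | exists g, S = coset_pred N g}.

Definition cls (G : magma) (N : G -> Prop) (g : G) : quot_car N :=
  exist _ (coset_pred N g) (ex_intro _ g erefl).

Definition rep (G : magma) (N : G -> Prop) (S : quot_car N) : G :=
  proj1_sig (constructive_indefinite_description _ (proj2_sig S)).

Definition quot (G : magma) (N : G -> Prop) : magma :=
  @Magma (quot_car N)
    (fun S T => cls N (gmul (rep S) (rep T)))
    (cls N gone)
    (fun S => cls N (ginv (rep S))).

Definition pair_magma (A B : magma) : magma :=
  @Magma (A * B)%type
    (fun x y => (gmul x.1 y.1, gmul x.2 y.2)) (gone, gone)
    (fun x => (ginv x.1, ginv x.2)).

Definition prod_magma (L : nat -> magma) : magma :=
  @Magma (forall i, L i)
    (fun x y i => gmul (x i) (y i)) (fun i => gone) (fun x i => ginv (x i)).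

Definition free_ultrafilter (w : (nat -> Prop) -> Prop) : Prop :=
  (forall A B : nat -> Prop, w A -> (forall n, A n -> B n) -> w B) /\
  (forall A B, w A -> w B -> w (fun n => A n /\ B n)) /\
  ~ w (fun _ => False) /\
  (forall A, w A \/ w (fun n => ~ A n)) /\
  (* free: the intersection of all members is empty *)
  (forall k : nat, exists A, w A /\ ~ A k).

Definition ultra_kernel (L : nat -> magma) (w : (nat -> Prop) -> Prop)
  : prod_magma L -> Prop := fun x => w (fun i => x i = gone).

Definition ultraprod (L : nat -> magma) (w : (nat -> Prop) -> Prop) : magma :=
  quot (@ultra_kernel L w).

Definition hdist (n : nat) (s t : 'S_n) : rat :=
  (#|[set x | s x != t x]|%:R / n%:R)%R.

Definition sofic (G : magma) : Prop :=
  forall (F : seq G) (eps : rat), (0 < eps)%R ->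
  exists (n : nat) (phi : G -> 'S_n), (0 < n)%N /\
    (forall g h, List.In g F -> List.In h F ->
        (* phi(gh) ~ phi(g) o phi(h); mathcomp's perm product s*t is "s then t" *)
        (hdist (phi (gmul g h)) ((phi h * phi g)%g) < eps)%R) /\
    (forall g, List.In g F -> g <> gone -> (1 - eps < hdist (phi g) 1%g)%R).

Definition pb (P : Prop) : bool :=
  if excluded_middle_informative P then true else false.

Definition pcount (T : Type) (P : T -> Prop) (s : seq T) : nat :=
  size (filter (fun x => pb (P x)) s).

Definition amenable (G : magma) : Prop :=
  forall (F : seq G) (eps : rat), (0 < eps)%R ->
  exists A : seq G, A <> [::] /\ List.NoDup A /\
    forall g, List.In g F ->
      (* |gA \ A| + |A \ gA| *)
      ((pcount (fun x => ~ List.In (gmul g x) A) A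
        + pcount (fun y => ~ List.In (gmul (ginv g) y) A) A)%:R
       <= eps * (size A)%:R)%R.

Definition cosofic (G : magma) (H : G -> Prop) : Prop :=
  exists (Gs Hs : nat -> G -> Prop) (hG : forall i, subgroup (Gs i)),
    (forall i x, Gs i.+1 x -> Gs i x) /\
    (forall i x, Hs i.+1 x -> Hs i x) /\
    (forall x, (forall i, Gs i x) <-> H x) /\
    (forall i x, Hs i x -> Gs i x) /\
    (forall i, normal (Hs i)) /\
    (forall i, sofic (quot (Hs i))) /\
    (forall i, amenable (quot (fun x : sub_magma (hG i) => Hs i (proj1_sig x)))).

Definition sigma_cosofic (G : magma) (H : G -> Prop) : Prop :=
  exists (Gs Hs : nat -> G -> Prop) (hG : forall i, subgroup (Gs i)),
    (forall i, subgroup (Hs i)) /\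
    (forall i x, Gs i x -> Gs i.+1 x) /\
    (forall i x, Hs i x -> Hs i.+1 x) /\
    (forall x : G, exists i, Gs i x) /\
    (forall x, (exists i, Hs i x) <-> H x) /\
    (forall i x, Hs i x -> Gs i x) /\
    (forall i, cosofic (fun x : sub_magma (hG i) => Hs i (proj1_sig x))).

Definition rel_sofic (G : magma) (H : G -> Prop) (K : magma) : Prop :=
  exists (G' : nat -> magma) (H' : forall i, G' i -> Prop)
         (w : (nat -> Prop) -> Prop),
    (forall i, is_group (G' i)) /\
    (forall i, subgroup (H' i)) /\
    (forall i, sofic (G' i)) /\
    (forall (i : nat) (hH : subgroup (H' i)), amenable (sub_magma hH)) /\
    free_ultrafilter w /\
    exists pi : G -> ultraprod (fun i => pair_magma (G' i) K) w,
      (forall g h, pi (gmul g h) = gmul (pi g) (pi h)) /\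
      (forall g h, pi g = pi h -> g = h) /\
      (* pi(G) ∩ prod_w (H'_i x K) = pi(H) *)
      (forall u, ((exists g, pi g = u) /\
                  (exists x : prod_magma (fun i => pair_magma (G' i) K),
                      (forall i, H' i (x i).1) /\ cls _ x = u))
                 <-> exists h, H h /\ pi h = u).

From Pilot Require Import Defs.
From mathcomp Require Import all_boot all_algebra all_fingroup.
From mathcomp Require Import boolp classical_sets filter.
From Stdlib Require Import Cantor FinFun.

Set Implicit Arguments. Unset Strict Implicit. Unset Printing Implicit Defensive.

(* Write G = ∪_i G_i and H = ∪_i H_i with H_i = ∩_j G_ij, where H_ij ⊲ G_i,
   G_i / H_ij is sofic and G_ij / H_ij is amenable.  Index the pairs (i, j) by nat
   through the Cantor pairing and take an ultrafilter containing every set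
   {(i, j) | k <= i, f i <= j}.  The map g ↦ (g H_ij, g)_(i,j), whose first
   coordinate is 1 when g ∉ G_i, embeds G into the ultraproduct of the
   G_i / H_ij × G; the second coordinate makes it injective.  If g ∈ H then
   g ∈ H_i ⊆ G_ij for all large i.  If g ∉ H, choose for every i some f i with
   g ∉ G_(i, f i); as G_ij decreases in j, the first coordinate lies outside
   G_ij / H_ij on the whole set given by k and f. *)

Lemma sval_inj (A : Type) (P : A -> Prop) : injective (@proj1_sig A P).
Proof. by move=> u v; apply: eq_sig_hprop => x p q; apply: Prop_irrelevance. Qed.

Lemma increasing_le (A : nat -> Prop) i j :
  (forall k, A k -> A k.+1) -> (i <= j)%N -> A i -> A j.
Proof.
move=> AS /subnKC <-; elim: (j - i)%N => [|k IH]; rewrite ?addn0 ?addnS //.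
by move=> /IH /AS.
Qed.

Lemma decreasing_le (A : nat -> Prop) i j :
  (forall k, A k.+1 -> A k) -> (i <= j)%N -> A j -> A i.
Proof.
move=> AS /subnKC <-; elim: (j - i)%N => [|k IH]; rewrite ?addn0 ?addnS //.
by move=> /AS /IH.
Qed.

Section Group.
Variable M : magma.
Hypothesis hM : is_group M.

Lemma gmulA (x y z : M) : gmul x (gmul y z) = gmul (gmul x y) z.
Proof. by case: hM. Qed.
Lemma gmul1g (x : M) : gmul gone x = x.
Proof. by case: hM => _ []. Qed.
Lemma gmulg1 (x : M) : gmul x gone = x.
Proof. by case: hM => _ [_ []]. Qed.
Lemma gmulVg (x : M) : gmul (ginv x) x = gone.
Proof. by case: hM => _ [_ [_ []]]. Qed.
Lemma gmulgV (x : M) : gmul x (ginv x) = gone.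
Proof. by case: hM => _ [_ [_ []]]. Qed.
Lemma gmulKg (x y : M) : gmul (ginv x) (gmul x y) = y.
Proof. by rewrite gmulA gmulVg gmul1g. Qed.
Lemma gmulKVg (x y : M) : gmul x (gmul (ginv x) y) = y.
Proof. by rewrite gmulA gmulgV gmul1g. Qed.

Lemma ginv_unique (x y : M) : gmul x y = gone -> x = ginv y.
Proof. by move=> xy1; rewrite -[x]gmulg1 -(gmulgV y) gmulA xy1 gmul1g. Qed.
Lemma ginvK (x : M) : ginv (ginv x) = x.
Proof. by symmetry; apply: ginv_unique; rewrite gmulgV. Qed.
Lemma ginvM (x y : M) : ginv (gmul x y) = gmul (ginv y) (ginv x).
Proof. by symmetry; apply: ginv_unique; rewrite -gmulA gmulKg gmulVg. Qed.
Lemma ginv1 : ginv (gone : M) = gone.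
Proof. by symmetry; apply: ginv_unique; rewrite gmul1g. Qed.

Lemma ginv_mul_eq1 (x y : M) : gmul (ginv x) y = gone <-> x = y.
Proof. by split=> [xy1 | <-]; [rewrite -(gmulKVg x y) xy1 gmulg1 | exact: gmulVg]. Qed.

Lemma sub_magma_group (K : M -> Prop) (hK : subgroup K) : is_group (sub_magma hK).
Proof.
by do ![split]; move=> *; apply: sval_inj; rewrite /= ?(gmulA, gmul1g, gmulg1, gmulVg, gmulgV).
Qed.

Lemma normal_restrict (K N : M -> Prop) (hK : subgroup K) :
  Defs.normal N -> Defs.normal (fun x : sub_magma hK => N (proj1_sig x)).
Proof.
case=> [[N1 NM NV] Nconj]; split; first split => //.
- by move=> x y; apply: NM.
- by move=> x; apply: NV.
- by move=> g h; apply: Nconj.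
Qed.

Section Quotient.
Variable N : M -> Prop.
Hypothesis hN : Defs.normal N.

Let N1 : N gone := sg1 (proj1 hN).
Let NM := sgM (proj1 hN).
Let NV := sgV (proj1 hN).
Let Nconj := proj2 hN.

Lemma cls_eqP (a b : M) : cls N a = cls N b <-> N (gmul (ginv a) b).
Proof.
split=> [eq_ab | Nab].
  have Nbb : coset_pred N b b by rewrite /coset_pred gmulVg.
  have coset_ba : coset_pred N b = coset_pred N a := f_equal (@proj1_sig _ _) (esym eq_ab).
  by rewrite coset_ba in Nbb.
apply: sval_inj; apply: funext => x; apply: propext; rewrite /coset_pred /=.
split=> Nx.
- by have := NM (NV Nab) Nx; rewrite ginvM ginvK -gmulA gmulKVg.
- by have := NM Nab Nx; rewrite -gmulA gmulKVg.
Qed.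

Lemma cls_rep (T : quot N) : cls N (rep T) = T.
Proof.
apply: sval_inj; rewrite /rep.
by case: (ClassicalEpsilon.constructive_indefinite_description _ _) => g /= ->.
Qed.

Lemma rep_cls_coset (a : M) : N (gmul (ginv (rep (cls N a))) a).
Proof. by apply/cls_eqP; rewrite cls_rep. Qed.

Lemma quot_ind (P : quot N -> Prop) : (forall a, P (cls N a)) -> forall T, P T.
Proof. by move=> Pcls T; rewrite -(cls_rep T). Qed.

Lemma clsM (a b : M) : gmul (cls N a : quot N) (cls N b) = cls N (gmul a b).
Proof.
apply/cls_eqP.
have := NM (Nconj (rep (cls N b)) (rep_cls_coset a)) (rep_cls_coset b).
by rewrite ginvM -!gmulA gmulKVg.
Qed.

Lemma clsV (a : M) : ginv (cls N a : quot N) = cls N (ginv a).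
Proof.
apply/cls_eqP.
have := Nconj (ginv a) (NV (rep_cls_coset a)).
by rewrite ginvK ginvM ginvK -gmulA gmulKVg.
Qed.

Lemma quot_group : is_group (quot N).
Proof.
have cls1 : gone = cls N gone :> quot N by [].
split; [|split; [|split; [|split]]].
- do 3!elim/quot_ind => ?; by rewrite !clsM gmulA.
- by elim/quot_ind => a; rewrite cls1 clsM gmul1g.
- by elim/quot_ind => a; rewrite cls1 clsM gmulg1.
- by elim/quot_ind => a; rewrite clsV clsM gmulVg.
- by elim/quot_ind => a; rewrite clsV clsM gmulgV.
Qed.

Lemma mem_rep_cls (K : M -> Prop) (hK : subgroup K) (NK : forall x, N x -> K x) a :
  K (rep (cls N a)) <-> K a.
Proof.
have Nra := rep_cls_coset a.
split=> Ka.
- by have := sgM hK Ka (NK _ Nra); rewrite gmulKVg.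
- by have := sgM hK Ka (NK _ (NV Nra)); rewrite ginvM ginvK gmulKVg.
Qed.

End Quotient.
End Group.

Lemma pair_magma_group (A B : magma) :
  is_group A -> is_group B -> is_group (pair_magma A B).
Proof.
move=> hA hB; split; [|split; [|split; [|split]]].
- by move=> [? ?] [? ?] [? ?]; rewrite /= (gmulA hA) (gmulA hB).
- by move=> [? ?]; rewrite /= (gmul1g hA) (gmul1g hB).
- by move=> [? ?]; rewrite /= (gmulg1 hA) (gmulg1 hB).
- by move=> [? ?]; rewrite /= (gmulVg hA) (gmulVg hB).
- by move=> [? ?]; rewrite /= (gmulgV hA) (gmulgV hB).
Qed.

Lemma prod_magma_group (L : nat -> magma) :
  (forall i, is_group (L i)) -> is_group (prod_magma L).
Proof.
move=> hL; split; [|split; [|split; [|split]]] => *;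
  apply: functional_extensionality_dep => i /=.
- exact: gmulA.
- exact: gmul1g.
- exact: gmulg1.
- exact: gmulVg.
- exact: gmulgV.
Qed.

Lemma In_map_inj (A B : Type) (f : A -> B) (s : seq A) x :
  injective f -> List.In (f x) (map f s) <-> List.In x s.
Proof.
move=> f_inj; rewrite List.in_map_iff.
by split=> [[y [/f_inj <-]] | xs] //; exists x.
Qed.

Lemma pcount_map (A B : Type) (f : A -> B) (P : B -> Prop) (s : seq A) :
  pcount P (map f s) = pcount (fun x => P (f x)) s.
Proof. by rewrite /pcount filter_map size_map. Qed.

Lemma eq_pcount (A : Type) (P Q : A -> Prop) (s : seq A) :
  (forall x, P x <-> Q x) -> pcount P s = pcount Q s.
Proof.
move=> PQ; rewrite /pcount; congr size; apply: eq_filter => x.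
by rewrite /pb (propext (PQ x)).
Qed.

Lemma amenable_iso (A B : magma) (f : A -> B) :
  {morph f : x y / gmul x y} -> {morph f : x / ginv x} -> injective f ->
  (forall b, exists a, f a = b) -> amenable A -> amenable B.
Proof.
move=> fM fV f_inj /choice [g gK] amA F eps eps_gt0.
have [X [X_neq0 [X_uniq X_folner]]] := amA (map g F) eps eps_gt0.
exists (map f X); split; first by case: X X_neq0 {X_uniq X_folner}.
split; first exact: Injective_map_NoDup.
move=> b /(List.in_map g) /X_folner; rewrite !pcount_map size_map.
have -> : pcount (fun x => ~ List.In (gmul b (f x)) (map f X)) X =
          pcount (fun x => ~ List.In (gmul (g b) x) X) X.
  by apply: eq_pcount => x; rewrite -{1}(gK b) -fM In_map_inj.
have -> : pcount (fun x => ~ List.In (gmul (ginv b) (f x)) (map f X)) X =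
          pcount (fun x => ~ List.In (gmul (ginv (g b)) x) X) X.
  by apply: eq_pcount => x; rewrite -{1}(gK b) -fV -fM In_map_inj.
done.
Qed.

Section QuotientImage.
Variables (M : magma) (N K : M -> Prop).
Hypotheses (hM : is_group M) (hN : Defs.normal N) (hK : subgroup K).
Hypothesis NK : forall x, N x -> K x.
Variable hKN : subgroup (fun T : quot N => K (rep T)).

Let NK_normal := normal_restrict hK hN.
Let K_group := sub_magma_group hM hK.

Let image_of (T : quot (fun x : sub_magma hK => N (proj1_sig x))) : sub_magma hKN :=
  exist _ (cls N (proj1_sig (rep T))) (proj2 (mem_rep_cls hM hN hK NK _) (proj2_sig (rep T))).

Let image_ofE a : proj1_sig (image_of (cls _ a)) = cls N (proj1_sig a).
Proof. by apply/(cls_eqP hM hN); apply: (rep_cls_coset K_group NK_normal). Qed.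

Lemma amenable_quot_image :
  amenable (quot (fun x : sub_magma hK => N (proj1_sig x))) -> amenable (sub_magma hKN).
Proof.
apply: (@amenable_iso _ _ image_of).
- elim/quot_ind => a; elim/quot_ind => b; apply: sval_inj.
  rewrite (clsM K_group NK_normal) (image_ofE (gmul a b)).
  transitivity (gmul (cls N (proj1_sig a) : quot N) (cls N (proj1_sig b))).
    exact: esym (clsM hM hN _ _).
  by rewrite -!image_ofE.
- elim/quot_ind => a; apply: sval_inj.
  rewrite (clsV K_group NK_normal) (image_ofE (ginv a)).
  transitivity (ginv (cls N (proj1_sig a) : quot N)); first exact: esym (clsV hM hN _).
  by rewrite -image_ofE.
- elim/quot_ind => a; elim/quot_ind => b.
  move=> /(f_equal (@proj1_sig _ _)); rewrite !image_ofE.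
  by move=> /(cls_eqP hM hN) ?; apply/(cls_eqP K_group NK_normal).
- move=> [T KT]; exists (cls _ (exist _ (rep T) KT : sub_magma hK)); apply: sval_inj.
  by rewrite image_ofE /= cls_rep.
Qed.

End QuotientImage.

Section Ultraproduct.
Variable w : (nat -> Prop) -> Prop.
Hypothesis hw : free_ultrafilter w.

Lemma ultraS (A B : nat -> Prop) : w A -> (forall n, A n -> B n) -> w B.
Proof. by case: hw => wS _; apply: wS. Qed.

Lemma ultraI (A B : nat -> Prop) : w A -> w B -> w (fun n => A n /\ B n).
Proof. by case: hw => _ [wI _]; apply: wI. Qed.

Lemma ultraT : w (fun _ => True).
Proof.
have [_ [_ [_ [/(_ (fun _ => True)) [] // wF _]]]] := hw.
by apply: (ultraS wF).
Qed.

Lemma ultra_exists (A : nat -> Prop) : w A -> exists n, A n.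
Proof.
move=> wA; apply: contrapT => noA; have [_ [_ [w0 _]]] := hw; apply: w0.
by apply: (ultraS wA) => n An; apply: noA; exists n.
Qed.

Variable L : nat -> magma.
Hypothesis hL : forall n, is_group (L n).

Lemma ultra_kernel_normal : Defs.normal (@ultra_kernel L w).
Proof.
split; first split.
- exact: (ultraS ultraT).
- by move=> x y wx wy; apply: (ultraS (ultraI wx wy)) => n [/= -> ->]; apply: gmul1g.
- by move=> x wx; apply: (ultraS wx) => n /= ->; apply: ginv1.
- by move=> g h wh; apply: (ultraS wh) => n /= ->; rewrite (gmul1g (hL n)) gmulVg.
Qed.

Lemma ultra_clsP (x y : prod_magma L) :
  cls (@ultra_kernel L w) x = cls _ y <-> w (fun n => x n = y n).
Proof.
rewrite (cls_eqP (prod_magma_group hL) ultra_kernel_normal).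
by split=> wxy; apply: (ultraS wxy) => n /=; rewrite (ginv_mul_eq1 (hL n)).
Qed.

End Ultraproduct.

Definition unpair1 (n : nat) : nat := (Cantor.of_nat n).1.
Definition unpair2 (n : nat) : nat := (Cantor.of_nat n).2.

Definition tail (k : nat) (f : nat -> nat) (n : nat) : Prop :=
  (k <= unpair1 n)%N /\ (f (unpair1 n) <= unpair2 n)%N.

Lemma exists_tail_ultrafilter :
  exists w, free_ultrafilter w /\ forall k f, w (tail k f).
Proof.
pose tails := filter_from setT (fun kf : nat * (nat -> nat) => tail kf.1 kf.2).
have tails_filter : Filter tails.
  apply: filter_fromT_filter; first by exists (0%N, fun _ => 0%N).
  move=> [k1 f1] [k2 f2]; exists (maxn k1 k2, fun i => maxn (f1 i) (f2 i)).
  by move=> n []; rewrite /= !geq_max => /andP[? ?] /andP[? ?].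
have tails_proper : ProperFilter tails.
  apply: filter_from_proper => -[k f] _; exists (Cantor.to_nat (k, f k)).
  by rewrite /tail /unpair1 /unpair2 Cantor.cancel_of_to.
have [U [U_ultra tails_U]] := ultraFilterLemma tails_proper.
have U_tail k f : U (tail k f) by apply: tails_U; exists (k, f).
exists U; split=> //; split; first by move=> A B UA AB; apply: filterS UA => x /AB.
split; first by move=> A B; apply: filterI.
split; first exact: (filter_not_empty U).
split; first by move=> A; case: (in_ultra_setVsetC A U_ultra); [left | right].
move=> m; exists (tail (unpair1 m).+1 (fun _ => 0%N)); split=> // -[].
by rewrite ltnn.
Qed.

(* The witnesses of [cosofic] in Type, so that they can be chosen for all i at
   once. *)
Record cosofic_chain (M : magma) (K : M -> Prop) := CosoficChain {
  chain_grp : nat -> M -> Prop;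
  chain_nrm : nat -> M -> Prop;
  chain_grp_subgroup : forall j, subgroup (chain_grp j);
  chain_grp_decr : forall j x, chain_grp j.+1 x -> chain_grp j x;
  chain_grp_cap : forall x, (forall j, chain_grp j x) <-> K x;
  chain_nrm_sub : forall j x, chain_nrm j x -> chain_grp j x;
  chain_nrm_normal : forall j, Defs.normal (chain_nrm j);
  chain_quot_sofic : forall j, sofic (quot (chain_nrm j));
  chain_quot_amenable : forall j,
    amenable (quot (fun x : sub_magma (chain_grp_subgroup j) => chain_nrm j (proj1_sig x)))
}.

Lemma cosofic_chain_of (M : magma) (K : M -> Prop) : cosofic K -> cosofic_chain K.
Proof.
move=> /cid [Gs /cid [Ns /cid [Gs_subgroup [Gs_decr [_ [Gs_cap cosofic_rest]]]]]].
have [Ns_sub [Ns_normal [Ns_sofic Ns_amenable]]] := cosofic_rest.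
exact: CosoficChain Gs_decr Gs_cap Ns_sub Ns_normal Ns_sofic Ns_amenable.
Qed.

Section SigmaCosofic.
Variables (G : magma) (H : G -> Prop) (Gs Hs : nat -> G -> Prop).
Hypothesis hG : is_group G.
Hypothesis Gs_subgroup : forall i, subgroup (Gs i).
Hypothesis Gs_incr : forall i x, Gs i x -> Gs i.+1 x.
Hypothesis Hs_incr : forall i x, Hs i x -> Hs i.+1 x.
Hypothesis Gs_cover : forall x, exists i, Gs i x.
Hypothesis Hs_cup : forall x, (exists i, Hs i x) <-> H x.
Hypothesis Hs_sub : forall i x, Hs i x -> Gs i x.
Variable C : forall i, cosofic_chain (fun x : sub_magma (Gs_subgroup i) => Hs i (proj1_sig x)).
Variable w : (nat -> Prop) -> Prop.
Hypothesis hw : free_ultrafilter w.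
Hypothesis w_tail : forall k f, w (tail k f).

(* The index n stands for the pair (i, j) = (unpair1 n, unpair2 n). *)
Definition Gi n : magma := sub_magma (Gs_subgroup (unpair1 n)).
Definition Gij n : Gi n -> Prop := chain_grp (C (unpair1 n)) (unpair2 n).
Definition Hij n : Gi n -> Prop := chain_nrm (C (unpair1 n)) (unpair2 n).
Arguments Gij : clear implicits.
Arguments Hij : clear implicits.

Lemma Gi_group n : is_group (Gi n).
Proof. exact: sub_magma_group. Qed.

Definition Gij_subgroup n : subgroup (Gij n) := chain_grp_subgroup _ _.

Lemma Hij_normal n : Defs.normal (Hij n).
Proof. exact: chain_nrm_normal. Qed.

Lemma Hij_sub n x : Hij n x -> Gij n x.
Proof. exact: chain_nrm_sub. Qed.

Lemma Gij_quot_amenable n :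
  amenable (quot (fun x : sub_magma (Gij_subgroup n) => Hij n (proj1_sig x))).
Proof. exact: chain_quot_amenable. Qed.

Definition quotG n : magma := quot (Hij n).
Definition quotH n (T : quotG n) : Prop := Gij n (rep T).
Arguments quotH : clear implicits.

Definition coset_proj n (g : G) : quotG n :=
  if pselect (Gs (unpair1 n) g) is left Gg then cls (Hij n) (exist _ g Gg) else gone.

Definition factor n : magma := pair_magma (quotG n) G.

Definition embed (g : G) : ultraprod factor w :=
  cls (@ultra_kernel factor w) (fun n => (coset_proj n g, g)).

Lemma quotG_group n : is_group (quotG n).
Proof. exact: (quot_group (Gi_group n) (Hij_normal n)). Qed.

Let factor_group n : is_group (factor n) := pair_magma_group (quotG_group n) hG.
Let embed_eqP := ultra_clsP hw factor_group.

Lemma quotH_cls n (a : Gi n) : quotH n (cls (Hij n) a) <-> Gij n a.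
Proof.
exact: (mem_rep_cls (Gi_group n) (Hij_normal n) (Gij_subgroup n) (@Hij_sub n) a).
Qed.

Lemma quotH_subgroup n : subgroup (quotH n).
Proof.
split.
- exact/quotH_cls/(sg1 (Gij_subgroup n)).
- elim/quot_ind => a; elim/quot_ind => b.
  rewrite (clsM (Gi_group n) (Hij_normal n)) !quotH_cls.
  exact: (sgM (Gij_subgroup n)).
- elim/quot_ind => a; rewrite (clsV (Gi_group n) (Hij_normal n)) !quotH_cls.
  exact: (sgV (Gij_subgroup n)).
Qed.

Lemma quotH_amenable n (hH : subgroup (quotH n)) : amenable (sub_magma hH).
Proof.
exact: (amenable_quot_image (Gi_group n) (Hij_normal n) (@Hij_sub n)
          (Gij_quot_amenable (n := n))).
Qed.

Lemma coset_projE n g (Gg : Gs (unpair1 n) g) : coset_proj n g = cls (Hij n) (exist _ g Gg).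
Proof. by rewrite /coset_proj; case: pselect => [Gg'|] //; congr cls; apply: sval_inj. Qed.

Lemma coset_projM n g h : Gs (unpair1 n) g -> Gs (unpair1 n) h ->
  coset_proj n (gmul g h) = gmul (coset_proj n g) (coset_proj n h).
Proof.
move=> Gg Gh; rewrite (coset_projE Gg) (coset_projE Gh) (coset_projE (sgM (Gs_subgroup _) Gg Gh)).
by rewrite (clsM (Gi_group n) (Hij_normal n)); congr cls; apply: sval_inj.
Qed.

Lemma eventually_Gs g : w (fun n => Gs (unpair1 n) g).
Proof.
have [k Gk] := Gs_cover g.
apply: (ultraS hw (w_tail k (fun _ => 0%N))) => n [kn _].
exact: (increasing_le (Gs_incr^~ g) kn Gk).
Qed.

Lemma embedM g h : embed (gmul g h) = gmul (embed g) (embed h).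
Proof.
rewrite /embed (clsM (prod_magma_group factor_group) (ultra_kernel_normal hw factor_group)).
apply/embed_eqP; apply: (ultraS hw (ultraI hw (eventually_Gs g) (eventually_Gs h))).
by move=> n [Gg Gh] /=; rewrite coset_projM.
Qed.

Lemma embed_inj : injective embed.
Proof. by move=> g h /embed_eqP /(ultra_exists hw) [n /(f_equal snd)]. Qed.

Lemma coset_proj_escapes g :
  ~ H g -> exists k f, forall n, tail k f n -> ~ quotH n (coset_proj n g).
Proof.
move=> Hg; have [k Gk] := Gs_cover g.
have /choice [f Kf] : forall i, exists j, forall Gg : Gs i g,
    ~ chain_grp (C i) j (exist _ g Gg).
  move=> i; case: (pselect (Gs i g)) => [Gg | nGg]; last by exists 0%N.
  have /existsNP [j Kj] : ~ forall j, chain_grp (C i) j (exist _ g Gg).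
    by move=> /(chain_grp_cap (C i)) Hsg; apply/Hg/Hs_cup; exists i.
  by exists j => Gg'; rewrite (Prop_irrelevance Gg' Gg).
exists k, f => n [kn fn].
have Gg := increasing_le (Gs_incr^~ g) kn Gk.
rewrite (coset_projE Gg) quotH_cls => Kg; apply: (Kf _ Gg).
exact: (decreasing_le ((@chain_grp_decr _ _ (C _))^~ _) fn Kg).
Qed.

Lemma eventually_quotH_coset_proj g : w (fun n => quotH n (coset_proj n g)) <-> H g.
Proof.
split=> [wH | /Hs_cup [i Hig]].
  apply: contrapT => /coset_proj_escapes [k [f escape]].
  have [n [Hn tn]] := ultra_exists hw (ultraI hw wH (w_tail k f)).
  exact: escape tn Hn.
apply: (ultraS hw (w_tail i (fun _ => 0%N))) => n [ni _].
have Hg := increasing_le (Hs_incr^~ g) ni Hig.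
rewrite (coset_projE (Hs_sub Hg)) quotH_cls.
exact: (proj2 (chain_grp_cap (C _) (exist _ g (Hs_sub Hg))) Hg (unpair2 n)).
Qed.

Lemma embed_image_quotH u :
  ((exists g, embed g = u) /\
   (exists x : prod_magma factor, (forall n, quotH n (x n).1) /\ cls _ x = u))
  <-> exists h, H h /\ embed h = u.
Proof.
split=> [[[g <-] [x [xH /embed_eqP x_g]]] | [h [Hh <-]]].
  exists g; split=> //; apply/eventually_quotH_coset_proj.
  by apply: (ultraS hw x_g) => n x_n; move: (xH n); rewrite x_n.
split; first by exists h.
pose x n : factor n :=
  if pselect (quotH n (coset_proj n h)) is left _ then (coset_proj n h, h) else (gone, h).
exists x; split.
  by move=> n; rewrite /x; case: pselect => // _; apply: sg1 (quotH_subgroup n).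
apply/embed_eqP; apply: (ultraS hw (proj2 (eventually_quotH_coset_proj h) Hh)) => n Hn.
by rewrite /x; case: pselect.
Qed.

Lemma rel_sofic_of_chains : rel_sofic H G.
Proof.
exists quotG, quotH, w; split; first exact: quotG_group.
split; first exact: quotH_subgroup.
split; first by move=> n; apply: chain_quot_sofic.
split; first exact: quotH_amenable.
split=> //; exists embed.
by split; [exact: embedM | split; [exact: embed_inj | exact: embed_image_quotH]].
Qed.

End SigmaCosofic.

Theorem corollary2p19 (G : magma) (H : G -> Prop) :
  is_group G -> subgroup H -> sigma_cosofic H -> rel_sofic H G.
Proof.
move=> hG _ [Gs [Hs [Gs_subgroup [_ [Gs_incr [Hs_incr [Gs_cover [Hs_cup [Hs_sub cos]]]]]]]]].
have [w [hw w_tail]] := exists_tail_ultrafilter.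
exact: (rel_sofic_of_chains hG Gs_incr Hs_incr Gs_cover Hs_cup Hs_sub
          (fun i => cosofic_chain_of (cos i)) hw w_tail).
Qed.
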